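(* For every integer $n\ge 1$, the polytope \[Q_n=\sum_{i=0}^{n-1}\mathrm{conv}\{e_{3i+1}+e_{3i+3},\,e_{3i+2}+e_{3n+1}\}+\sum_{0\le i<j\le n-1}\mathrm{conv}\{e_{3i+1}+e_{3i+3}+e_{3j+2},\,e_{3i+2}+e_{3j+1}+e_{3j+3},\,e_{3i+2}+e_{3j+2}+e_{3n+1}\}\subseteq\mathbb{R}^{3n+1}\] is unimodularly equivalent to \[\overline{Q}_n=\sum_{S\in\mathcal{I}_n}\Delta_S\subseteq\mathbb{R}^{n+1}.\]
   Context: All sums of polytopes are Minkowski sums; $e_k$ denotes standard basis vectors. $Q_n$ is a state polytope for the toric ideal of the code $P(2_n)$. Let $\mathcal{I}_n=\{S\cup\{n+1\} : S\subseteq[n],\ |S|\in\{1,2\}\}$, and for $S\subseteq[n+1]$ let $\Delta_S=\mathrm{conv}\{e_i\in\mathbb{R}^{n+1}: i\in S\}$. Polytopes $P,P'\subseteq\mathbb{R}^m$ are unimodularly equivalent if $P'=MP+v$ with $M\in\mathrm{GL}_m(\mathbb{Z})$, $v\in\mathbb{Z}^m$; for $P\subseteq\mathbb{R}^N$, $P'\subseteq\mathbb{R}^m$ with $N>m$, this means $P$ is unimodularly equivalent to $P'\times\{0\}\subseteq\mathbb{R}^N$. *)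

From HB Require Import structures.
From mathcomp Require Import all_boot all_order all_algebra.
From mathcomp Require Import reals.
Set Implicit Arguments. Unset Strict Implicit. Unset Printing Implicit Defensive.
Import Order.TTheory GRing.Theory Num.Theory.
Local Open Scope ring_scope.

Definition pset (R : realType) (m : nat) := 'rV[R]_m -> Prop.

(* standard basis vector e_k, 1-indexed: e_k has a 1 at coordinate k (k in 1..m) *)
Definition ev (R : realType) (m k : nat) : 'rV[R]_m :=
  \row_(j < m) (if j.+1 == k then 1 else 0).

Definition conv (R : realType) (m : nat) (s : seq 'rV[R]_m) : pset R m :=
  fun x => exists w : 'I_(size s) -> R,
    (forall i, 0 <= w i) /\ \sum_i w i = 1 /\
    x = \sum_i w i *: s`_i.

Fixpoint msum (R : realType) (m : nat) (Ps : seq (pset R m)) : pset R m :=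
  match Ps with
  | [::] => fun x => x = 0
  | P :: Ps' => fun x => exists y z, P y /\ msum Ps' z /\ x = y + z
  end.

Definition Qn (R : realType) (n : nat) : pset R (3 * n).+1%N :=
  let e := @ev R (3 * n).+1%N in
  msum ([seq conv [:: e (3*i+1)%N + e (3*i+3)%N; e (3*i+2)%N + e (3*n+1)%N]
         | i <- iota 0 n] ++
        [seq conv [:: e (3*i+1)%N + e (3*i+3)%N + e (3*j+2)%N;
                      e (3*i+2)%N + e (3*j+1)%N + e (3*j+3)%N;
                      e (3*i+2)%N + e (3*j+2)%N + e (3*n+1)%N]
         | i <- iota 0 n, j <- iota i.+1 (n - i.+1)%N]).

Definition Delta (R : realType) (m : nat) (Sx : seq nat) : pset R m :=
  conv [seq @ev R m i | i <- Sx].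

(* I_n = { S u {n+1} : S subset [n], |S| in {1,2} } *)
Definition In_sets (n : nat) : seq (seq nat) :=
  [seq [:: a; n.+1] | a <- iota 1 n] ++
  [seq [:: a; b; n.+1] | a <- iota 1 n, b <- iota a.+1 (n - a)%N].

Definition Qbarn (R : realType) (n : nat) : pset R n.+1 :=
  msum [seq @Delta R n.+1 Sx | Sx <- In_sets n].

(* P' x {0} in R^N, for P' in R^m (m <= N) *)
Definition pad (R : realType) (m N : nat) (x : 'rV[R]_m) : 'rV[R]_N :=
  \row_(j < N) (if @insub nat (fun k => (k < m)%N) 'I_m (val j) is Some k then x 0 k else 0).

(* P (in R^N) is unimodularly equivalent to P' x {0} (P' in R^m, m < N):
   P' x {0} = M P + v with M in GL_N(Z), v in Z^N (row-vector convention). *)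
Definition unimod_equiv_lower (R : realType) (N m : nat)
    (P : pset R N) (P' : pset R m) : Prop :=
  exists (M : 'M[int]_N) (v : 'rV[int]_N),
    M \in unitmx /\
    forall y : 'rV[R]_N,
      (exists x', P' x' /\ y = pad N x') <->
      (exists x, P x /\ y = x *m map_mx (fun z : int => z%:~R) M
                              + map_mx (fun z : int => z%:~R) v).

(* Group the coordinates of R^(3n+1) into blocks a_k, b_k, c_k = e_(3k-2), e_(3k-1), e_(3k)
   (1 <= k <= n) and t = e_(3n+1), and relabel the target basis as u_1, ..., u_(n+1),
   p_1, q_1, ..., p_n, q_n.  The unimodular map a_k |-> u_k - p_k + q_k, b_k |-> q_k,
   c_k |-> p_k, t |-> u_(n+1) sends a_k + c_k to u_k + q_k and b_k to q_k, so it maps the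
   summand of Q_n built on the blocks k in S onto Delta_(S u {n+1}) x {0} translated by
   the lattice vector sum_(k in S) q_k.  Linear maps and translations commute with
   Minkowski sums, hence Q_n is mapped onto a lattice translate of Qbar_n x {0}. *)

From HB Require Import structures.
From mathcomp Require Import all_boot all_order all_algebra.
From mathcomp Require Import classical_sets reals.
From mathcomp Require Import zify ring.
From Stdlib Require List.
Set Implicit Arguments. Unset Strict Implicit. Unset Printing Implicit Defensive.
Import Order.TTheory GRing.Theory Num.Theory.
Local Open Scope ring_scope.
Local Open Scope classical_set_scope.

Lemma Forall2_map (I : eqType) (A B : Type) (rel : A -> B -> Prop)
    (F : I -> A) (G : I -> B) (l : seq I) :
  {in l, forall i, rel (F i) (G i)} -> List.Forall2 rel (map F l) (map G l).
Proof.
elim: l => [|i l IHl] relFG /=; first exact: List.Forall2_nil.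
apply: List.Forall2_cons; first by apply: relFG; rewrite mem_head.
by apply: IHl => j lj; apply: relFG; rewrite inE lj orbT.
Qed.

Lemma Forall2_allpairs (I : eqType) (J : I -> eqType) (A B : Type)
    (rel : A -> B -> Prop) (F : forall i, J i -> A) (G : forall i, J i -> B)
    (s : seq I) (t : forall i, seq (J i)) :
  {in s, forall i, {in t i, forall j, rel (F i j) (G i j)}} ->
  List.Forall2 rel (allpairs_dep F s t) (allpairs_dep G s t).
Proof.
elim: s => [|i s IHs] relFG /=; first exact: List.Forall2_nil.
apply: List.Forall2_app; first by apply: Forall2_map; apply: relFG; rewrite mem_head.
by apply: IHs => i' si'; apply: relFG; rewrite inE si' orbT.
Qed.

Section MinkowskiSums.
Variable R : realType.

Definition translate m (v : 'rV[R]_m) (P : pset R m) : pset R m :=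
  [set x + v | x in P].

Definition int_translate m (P Q : pset R m) : Prop :=
  exists w : 'rV[int]_m, P = translate (map_mx intr w) Q.

Lemma image_conv m k (f : {linear 'rV[R]_m -> 'rV[R]_k}) (s : seq 'rV[R]_m) :
  f @` conv s = conv (map f s).
Proof.
apply/seteqP; split => [_ [_ [w [w_ge0 [w_sum ->]]] <-] | y].
  rewrite /conv size_map; exists w; do 2!split => //.
  by rewrite linear_sum; apply: eq_bigr => i _; rewrite linearZ (nth_map 0).
rewrite /conv size_map => -[w [w_ge0 [w_sum ->]]].
exists (\sum_i w i *: s`_i); first by exists w.
by rewrite linear_sum; apply: eq_bigr => i _; rewrite linearZ (nth_map 0).
Qed.

Lemma conv_translate m (s : seq 'rV[R]_m) (v : 'rV[R]_m) :
  conv [seq x + v | x <- s] = translate v (conv s).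
Proof.
have shift_sum (w : 'I_(size s) -> R) : \sum_i w i = 1 ->
    \sum_i w i *: (s`_i + v) = \sum_i w i *: s`_i + v.
  by move=> w_sum; rewrite -[v in RHS]scale1r -w_sum scaler_suml -big_split;
     apply: eq_bigr => i _; rewrite scalerDr.
apply/seteqP; split => [y | _ [_ [w [w_ge0 [w_sum ->]]] <-]].
  rewrite /conv size_map => -[w [w_ge0 [w_sum ->]]].
  exists (\sum_i w i *: s`_i); first by exists w.
  by rewrite -shift_sum //; apply: eq_bigr => i _; rewrite (nth_map 0).
rewrite /conv size_map; exists w; do 2!split => //.
by rewrite -shift_sum //; apply: eq_bigr => i _; rewrite (nth_map 0).
Qed.

Lemma translateK m (v : 'rV[R]_m) (P : pset R m) :
  translate (- v) (translate v P) = P.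
Proof.
rewrite /translate image_comp -[RHS]image_id.
by apply: eq_imagel => x _ /=; rewrite addrK.
Qed.

Lemma image_msum m k (f : {linear 'rV[R]_m -> 'rV[R]_k}) (Ps : seq (pset R m)) :
  f @` msum Ps = msum [seq f @` P | P <- Ps].
Proof.
elim: Ps => [|P Ps IHPs] /=; apply/seteqP; split.
- by move=> _ [_ -> <-]; rewrite linear0.
- by move=> _ ->; exists 0; rewrite ?linear0.
- move=> _ [_ [y [z [Py [Pz ->]]]] <-]; exists (f y), (f z).
  by rewrite -IHPs linearD; do !split; [exists y | exists z].
- move=> _ [_ [z' [[y Py <-] [+ ->]]]]; rewrite -IHPs => -[z Pz <-].
  by exists (y + z); [exists y, z | rewrite linearD].
Qed.

Lemma msum_translate m (Ps Qs : seq (pset R m)) :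
  List.Forall2 (@int_translate m) Ps Qs -> int_translate (msum Ps) (msum Qs).
Proof.
elim => [|P Q Ps' Qs' [v PQ] _ [w PsQs]].
  exists 0; rewrite map_mx0; apply/seteqP; split => [_ -> | _ [_ -> <-]].
    by exists 0; rewrite ?addr0.
  by rewrite addr0.
exists (v + w); rewrite /= PQ PsQs map_mxD; apply/seteqP; split.
  move=> _ [_ [_ [[y Qy <-] [[z Qz <-] ->]]]].
  by exists (y + z); [exists y, z | rewrite addrACA].
move=> _ [_ [y [z [Qy [Qz ->]]]] <-].
exists (y + map_mx intr v), (z + map_mx intr w).
by do !split; [exists y | exists z | rewrite addrACA].
Qed.

End MinkowskiSums.

Section UnitRows.
Variable T : pzRingType.

Definition erow (m j : nat) : 'rV[T]_m := \row_(l < m) (l == j :> nat)%:R.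

Lemma erow_mul m n (i : 'I_m) (A : 'M[T]_(m, n)) : erow m i *m A = row i A.
Proof. by rewrite rowE; congr (_ *m _); apply/rowP => l; rewrite !mxE -val_eqE. Qed.

Lemma erow_mul_rows m n j (g : nat -> 'rV[T]_n) : (j < m)%N ->
  erow m j *m \matrix_(i < m) g i = g j.
Proof. by move=> lt_jm; rewrite (erow_mul (Ordinal lt_jm)) rowK. Qed.

End UnitRows.

Lemma map_erow (T S : pzRingType) (f : {rmorphism T -> S}) m j :
  map_mx f (erow T m j) = erow S m j.
Proof. by apply/rowP => l; rewrite !mxE rmorph_nat. Qed.

Lemma index_cases n i : (i < (3 * n).+1)%N ->
  i = (3 * n)%N \/ exists2 k, (k < n)%N & [\/ i = 3 * k, i = (3 * k).+1 | i = (3 * k).+2]%N.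
Proof.
move=> lt_iN; have [->|ne_in] := eqVneq i (3 * n)%N; [by left | right].
exists (i %/ 3)%N; first by lia.
have : (i %% 3 < 3)%N by lia.
case: (i %% 3)%N (divn_eq i 3) => [|[|[|r]]] // i_eq _;
  [constructor 1 | constructor 2 | constructor 3]; lia.
Qed.

Section CoordinateChange.
Variables (T : pzRingType) (n : nat).
Local Notation N := (3 * n).+1.
Local Notation e := (erow T N).

(* Indices are 0-based: a_k, b_k, c_k, t are coordinates 3k, 3k+1, 3k+2, 3n and
   u_k, p_k, q_k are coordinates k, n+1+2k, n+2+2k. *)
Definition Qmx_row (i : nat) : 'rV[T]_N :=
  let k := (i %/ 3)%N in
  if i == (3 * n)%N then e n else
  match (i %% 3)%N with
  | 0 => e k - e (n + 2 * k).+1 + e (n + 2 * k).+2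
  | 1 => e (n + 2 * k).+2
  | _ => e (n + 2 * k).+1
  end.

Definition Qmx : 'M[T]_N := \matrix_(i < N) Qmx_row i.

Definition Qmx_inv_row (j : nat) : 'rV[T]_N :=
  let k := ((j - n.+1) %/ 2)%N in
  if (j < n)%N then e (3 * j) - e (3 * j).+1 + e (3 * j).+2
  else if j == n then e (3 * n)
  else if odd (j - n) then e (3 * k).+2 else e (3 * k).+1.

Definition Qmx_inv : 'M[T]_N := \matrix_(j < N) Qmx_inv_row j.

Lemma erow_Qmx_last : e (3 * n) *m Qmx = e n.
Proof. by rewrite erow_mul_rows // /Qmx_row eqxx. Qed.

Lemma erow_Qmx_0 k : (k < n)%N ->
  e (3 * k) *m Qmx = e k - e (n + 2 * k).+1 + e (n + 2 * k).+2.
Proof.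
move=> lt_kn; rewrite erow_mul_rows /Qmx_row; last by lia.
have -> : (3 * k == 3 * n)%N = false by lia.
by rewrite mulKn // modnMr.
Qed.

Lemma erow_Qmx_1 k : (k < n)%N -> e (3 * k).+1 *m Qmx = e (n + 2 * k).+2.
Proof.
move=> lt_kn; rewrite erow_mul_rows /Qmx_row; last by lia.
have -> : ((3 * k).+1 == 3 * n)%N = false by lia.
have -> : ((3 * k).+1 %% 3 = 1)%N by lia.
by have -> : ((3 * k).+1 %/ 3 = k)%N by lia.
Qed.

Lemma erow_Qmx_2 k : (k < n)%N -> e (3 * k).+2 *m Qmx = e (n + 2 * k).+1.
Proof.
move=> lt_kn; rewrite erow_mul_rows /Qmx_row; last by lia.
have -> : ((3 * k).+2 == 3 * n)%N = false by lia.
have -> : ((3 * k).+2 %% 3 = 2)%N by lia.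
by have -> : ((3 * k).+2 %/ 3 = k)%N by lia.
Qed.

Lemma erow_Qmx_inv_low k : (k < n)%N ->
  e k *m Qmx_inv = e (3 * k) - e (3 * k).+1 + e (3 * k).+2.
Proof. by move=> lt_kn; rewrite erow_mul_rows /Qmx_inv_row ?lt_kn //; lia. Qed.

Lemma erow_Qmx_inv_odd k : (k < n)%N -> e (n + 2 * k).+1 *m Qmx_inv = e (3 * k).+2.
Proof.
move=> lt_kn; rewrite erow_mul_rows /Qmx_inv_row; last by lia.
have -> : ((n + 2 * k).+1 < n)%N = false by lia.
have -> : ((n + 2 * k).+1 == n)%N = false by lia.
have -> : ((n + 2 * k).+1 - n = (2 * k).+1)%N by lia.
have -> : ((n + 2 * k).+1 - n.+1 = 2 * k)%N by lia.
by rewrite /= oddM mulKn.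
Qed.

Lemma erow_Qmx_inv_even k : (k < n)%N -> e (n + 2 * k).+2 *m Qmx_inv = e (3 * k).+1.
Proof.
move=> lt_kn; rewrite erow_mul_rows /Qmx_inv_row; last by lia.
have -> : ((n + 2 * k).+2 < n)%N = false by lia.
have -> : ((n + 2 * k).+2 == n)%N = false by lia.
have -> : ((n + 2 * k).+2 - n = (2 * k).+2)%N by lia.
rewrite /= oddM /=.
by have -> : (((n + 2 * k).+2 - n.+1) %/ 2 = k)%N by lia.
Qed.

Lemma erow_Qmx_inv_last : e n *m Qmx_inv = e (3 * n).
Proof. by rewrite erow_mul_rows /Qmx_inv_row ?ltnn ?eqxx //; lia. Qed.

Lemma Qmx_mulV : Qmx *m Qmx_inv = 1%:M.
Proof.
apply/row_matrixP => i; rewrite -!erow_mul mulmxA mulmx1.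
have [->|[k lt_kn [->|->|->]]] := index_cases (ltn_ord i).
- by rewrite erow_Qmx_last erow_Qmx_inv_last.
- rewrite erow_Qmx_0 // !mulmxDl mulNmx erow_Qmx_inv_low // erow_Qmx_inv_odd //.
  by rewrite erow_Qmx_inv_even // addrK subrK.
- by rewrite erow_Qmx_1 // erow_Qmx_inv_even.
- by rewrite erow_Qmx_2 // erow_Qmx_inv_odd.
Qed.

End CoordinateChange.

Lemma map_Qmx (T S : pzRingType) (f : {rmorphism T -> S}) n :
  map_mx f (Qmx T n) = Qmx S n.
Proof.
apply/row_matrixP => i; rewrite -map_row !rowK /Qmx_row.
case: ifP => _; last case: (_ %% 3)%N => [|[|_]];
  by rewrite ?map_mxD ?map_mxN !map_erow.
Qed.

Lemma Qmx_unit n : Qmx int n \in unitmx.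
Proof. exact: (mulmx1_unit (Qmx_mulV int n)).1. Qed.

Section Padding.
Variables (R : realType) (m N : nat).

Lemma pad_is_linear : linear (@pad R m N).
Proof.
by move=> a x y; apply/rowP => j; rewrite !mxE; case: insubP => [o _ _|_];
  rewrite ?mxE ?mulr0 ?addr0.
Qed.

HB.instance Definition _ :=
  GRing.isLinear.Build R 'rV[R]_m 'rV[R]_N _ (@pad R m N) pad_is_linear.

Lemma pad_erow j : (j < m)%N -> (m <= N)%N -> pad N (erow R m j) = erow R N j.
Proof.
move=> lt_jm le_mN; apply/rowP => l; rewrite !mxE.
case: insubP => [o _ <-|/= ge_lm]; first by rewrite mxE.
by have -> : (l == j :> nat) = false by lia.
Qed.

Lemma ev_erow k : @ev R m k.+1 = erow R m k.
Proof. by apply/rowP => l; rewrite !mxE eqSS; case: (_ == _). Qed.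

Lemma affine_image_unimod_equiv_lower (P : pset R N) (P' : pset R m)
    (M : 'M[int]_N) (v : 'rV[int]_N) :
  M \in unitmx -> pad N @` P' = [set x *m map_mx intr M + map_mx intr v | x in P] ->
  unimod_equiv_lower P P'.
Proof.
move=> unitM PP'; exists M, v; split => // y; split.
  move=> [x' [P'x' ->]]; have : (pad N @` P') (pad N x') by exists x'.
  by rewrite PP' => -[x Px <-]; exists x.
move=> [x [Px ->]]; have : [set x *m map_mx intr M + map_mx intr v | x in P]
  (x *m map_mx intr M + map_mx intr v) by exists x.
by rewrite -PP' => -[x' P'x' <-]; exists x'.
Qed.

End Padding.

Section Qn.
Variables (R : realType) (n : nat).
Local Notation N := (3 * n).+1.
Local Notation L := (mulmxr (Qmx R n)).

Lemma In_setsE : In_sets n =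
  [seq [:: i.+1; n.+1] | i <- iota 0 n] ++
  [seq [:: i.+1; j.+1; n.+1] | i <- iota 0 n, j <- iota i.+1 (n - i.+1)].
Proof.
have iotaS m k : iota m.+1 k = map succn (iota m k) by exact: (iotaDl 1).
rewrite /In_sets iotaS -map_comp allpairs_mapl; congr (_ ++ flatten _).
by apply: eq_map => i; rewrite iotaS -map_comp.
Qed.

Lemma Qmx_image_edge i : (i < n)%N ->
  int_translate
    (L @` conv [:: ev R N (3 * i + 1) + ev R N (3 * i + 3);
                   ev R N (3 * i + 2) + ev R N (3 * n + 1)])
    (pad N @` @Delta R n.+1 [:: i.+1; n.+1]).
Proof.
move=> lt_in; exists (erow int N (n + 2 * i).+2).
rewrite map_erow /Delta !image_conv -conv_translate /= !addn1 addn2 addn3 !ev_erow.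
rewrite !mulmxDl erow_Qmx_last erow_Qmx_0 // erow_Qmx_1 // erow_Qmx_2 //.
rewrite !pad_erow; try lia.
by congr (conv [:: _; _]); apply/rowP => c; rewrite !mxE; ring.
Qed.

Lemma Qmx_image_triangle i j : (i < j)%N -> (j < n)%N ->
  int_translate
    (L @` conv [:: ev R N (3 * i + 1) + ev R N (3 * i + 3) + ev R N (3 * j + 2);
                   ev R N (3 * i + 2) + ev R N (3 * j + 1) + ev R N (3 * j + 3);
                   ev R N (3 * i + 2) + ev R N (3 * j + 2) + ev R N (3 * n + 1)])
    (pad N @` @Delta R n.+1 [:: i.+1; j.+1; n.+1]).
Proof.
move=> lt_ij lt_jn; have lt_in : (i < n)%N by lia.
exists (erow int N (n + 2 * i).+2 + erow int N (n + 2 * j).+2).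
rewrite map_mxD !map_erow /Delta !image_conv -conv_translate /=.
rewrite !addn1 !addn2 !addn3 !ev_erow !mulmxDl.
rewrite erow_Qmx_last !erow_Qmx_0 // !erow_Qmx_1 // !erow_Qmx_2 //.
rewrite !pad_erow; try lia.
by congr (conv [:: _; _; _]); apply/rowP => c; rewrite !mxE; ring.
Qed.

Lemma Qn_image_translate : int_translate (L @` @Qn R n) (pad N @` @Qbarn R n).
Proof.
rewrite /Qn /Qbarn !image_msum; apply: msum_translate.
rewrite In_setsE !map_cat !map_allpairs -!map_comp.
apply: List.Forall2_app.
  apply: Forall2_map => i; rewrite mem_iota => /andP[_ lt_in].
  exact: Qmx_image_edge.
apply: Forall2_allpairs => i; rewrite mem_iota => /andP[_ lt_in] j.
by rewrite mem_iota => /andP[lt_ij lt_jn]; apply: Qmx_image_triangle; lia.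
Qed.

End Qn.

Theorem mainTheorem9 (R : realType) (n : nat) :
  (1 <= n)%N -> unimod_equiv_lower (@Qn R n) (@Qbarn R n).
Proof.
move=> _; have [w QnQbarn] := Qn_image_translate R n.
apply: (affine_image_unimod_equiv_lower (Qmx_unit n) (v := - w)).
rewrite map_Qmx map_mxN.
have -> : [set x *m Qmx R n + - map_mx intr w | x in @Qn R n] =
          translate (- map_mx intr w) (mulmxr (Qmx R n) @` @Qn R n).
  by rewrite /translate image_comp.
by rewrite QnQbarn translateK.
Qed.
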